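(* Let $\mathcal{C}$ be a model of linear logic with comonad $(!,\mathrm{der},\mathrm{dig})$. Let $(S,\pi_0,\pi_1,\sigma)$ be a summability structure on $\mathcal{C}$. Let $\partial_X:!SX\to S!X$ be a natural transformation satisfying $\pi_0\circ\partial_X=!\pi_0$, and set $\mathrm{d}_X:=\pi_1\circ\partial_X:!SX\to !X$. Then the equation $S(\mathrm{der}_X)\circ\partial_X=\mathrm{der}_{SX}$ holds (for all $X$) if and only if $\mathrm{der}_X\circ \mathrm{d}_X=\mathrm{der}_X\circ !\pi_1$ holds (for all $X$).
   Context: A comonad $(!,\mathrm{der},\mathrm{dig})$ consists of an endofunctor $!$ with natural transformations $\mathrm{der}_X:!X\to X$ and $\mathrm{dig}_X:!X\to !!X$ satisfying the comonad laws. A pre-summability structure $(S,\pi_0,\pi_1,\sigma)$ on $\mathcal{C}$ consists of the following data. There are distinguished zero morphisms $0_{X,Y}$. There is an endofunctor $S$ with $S(0)=0$. There are natural transformations $\pi_0,\pi_1,\sigma:S\Rightarrow\mathrm{Id}$, where $\pi_0,\pi_1$ are jointly monic: $\pi_0\circ f=\pi_0\circ g$ and $\pi_1\circ f=\pi_1\circ g$ imply $f=g$. Morphisms $f_0,f_1:X\to Y$ are summable if there is a (unique) $\langle f_0,f_1\rangle:X\to SY$ with $\pi_i\circ\langle f_0,f_1\rangle=f_i$. Their sum is $\sigma\circ\langle f_0,f_1\rangle$. A summability structure is a pre-summability structure whose partial sum is commutative, has $0$ as neutral element, and is associative, in the partial-commutative-monoid sense. *)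

Set Implicit Arguments.
Unset Strict Implicit.

Record Category := {
  Obj :> Type;
  Hom : Obj -> Obj -> Type;
  idm : forall X : Obj, Hom X X;
  comp : forall X Y Z : Obj, Hom Y Z -> Hom X Y -> Hom X Z;
  comp_id_l : forall X Y (f : Hom X Y), comp (idm Y) f = f;
  comp_id_r : forall X Y (f : Hom X Y), comp f (idm X) = f;
  comp_assoc : forall X Y Z W (f : Hom X Y) (g : Hom Y Z) (h : Hom Z W),
      comp h (comp g f) = comp (comp h g) f
}.

Arguments idm {C} X : rename.
Arguments comp {C X Y Z} g f : rename.
Notation "g \o f" := (comp g f) (at level 40, left associativity).

Record EndoFunctor (C : Category) := {
  fobj :> C -> C;
  fmap : forall X Y : C, Hom X Y -> Hom (fobj X) (fobj Y);
  fmap_id : forall X : C, fmap (idm X) = idm (fobj X);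
  fmap_comp : forall X Y Z (f : Hom X Y) (g : Hom Y Z),
      fmap (g \o f) = fmap g \o fmap f
}.
Arguments fmap {C} F {X Y} f : rename.

(** Natural transformations are given by their components and naturality;
    we state them for each needed shape. *)

Definition natural_to_id (C : Category) (F : EndoFunctor C)
  (a : forall X : C, Hom (F X) X) : Prop :=
  forall X Y (f : Hom X Y), f \o a X = a Y \o fmap F f.

Definition natural_to_comp (C : Category) (F G H : EndoFunctor C)
  (a : forall X : C, Hom (F X) (G (H X))) : Prop :=
  forall X Y (f : Hom X Y), fmap G (fmap H f) \o a X = a Y \o fmap F f.

Definition natural_swap (C : Category) (G H : EndoFunctor C)
  (a : forall X : C, Hom (G (H X)) (H (G X))) : Prop :=
  forall X Y (f : Hom X Y),
    fmap H (fmap G f) \o a X = a Y \o fmap G (fmap H f).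

Arguments natural_to_id {C} F a.
Arguments natural_to_comp {C} F G H a.
Arguments natural_swap {C} G H a.

Record Comonad (C : Category) := {
  bang :> EndoFunctor C;
  der : forall X : C, Hom (bang X) X;
  dig : forall X : C, Hom (bang X) (bang (bang X));
  der_natural : natural_to_id bang der;
  dig_natural : natural_to_comp bang bang bang dig;
  comonad_law1 : forall X : C, der (bang X) \o dig X = idm (bang X);
  comonad_law2 : forall X : C, fmap bang (der X) \o dig X = idm (bang X);
  comonad_law3 : forall X : C,
      dig (bang X) \o dig X = fmap bang (dig X) \o dig X
}.
Arguments der {C} c X : rename.
Arguments dig {C} c X : rename.

Record PreSummability (C : Category) := {
  zero : forall X Y : C, Hom X Y;
  zero_comp_l : forall X Y Z (f : Hom X Y), zero Y Z \o f = zero X Z;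
  zero_comp_r : forall X Y Z (g : Hom Y Z), g \o zero X Y = zero X Z;
  Sf :> EndoFunctor C;
  S_zero : forall X Y : C, fmap Sf (zero X Y) = zero (Sf X) (Sf Y);
  pi0 : forall X : C, Hom (Sf X) X;
  pi1 : forall X : C, Hom (Sf X) X;
  sigma : forall X : C, Hom (Sf X) X;
  pi0_natural : natural_to_id Sf pi0;
  pi1_natural : natural_to_id Sf pi1;
  sigma_natural : natural_to_id Sf sigma;
  pi_jointly_monic : forall X Y (f g : Hom X (Sf Y)),
      pi0 Y \o f = pi0 Y \o g -> pi1 Y \o f = pi1 Y \o g -> f = g
}.
Arguments zero {C} p X Y : rename.
Arguments pi0 {C} p X : rename.
Arguments pi1 {C} p X : rename.
Arguments sigma {C} p X : rename.

Definition summable (C : Category) (P : PreSummability C) (X Y : C)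
  (f0 f1 : Hom X Y) : Prop :=
  exists h : Hom X (P Y), pi0 P Y \o h = f0 /\ pi1 P Y \o h = f1.

Definition is_sum (C : Category) (P : PreSummability C) (X Y : C)
  (f0 f1 g : Hom X Y) : Prop :=
  exists h : Hom X (P Y),
    pi0 P Y \o h = f0 /\ pi1 P Y \o h = f1 /\ sigma P Y \o h = g.

Record Summability (C : Category) := {
  presum :> PreSummability C;
  sum_comm : forall X Y (f0 f1 g : Hom X Y),
      is_sum presum f0 f1 g -> is_sum presum f1 f0 g;
  sum_zero : forall X Y (f : Hom X Y), is_sum presum f (zero presum X Y) f;
  sum_assoc : forall X Y (f0 f1 f2 g01 g : Hom X Y),
      is_sum presum f0 f1 g01 -> is_sum presum g01 f2 g ->
      exists g12, is_sum presum f1 f2 g12 /\ is_sum presum f0 g12 g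
}.

Definition dmap (C : Category) (B : Comonad C) (P : PreSummability C)
  (partial : forall X : C, Hom (B (P X)) (P (B X))) (X : C)
  : Hom (B (P X)) (B X) :=
  pi1 P (B X) \o partial X.
Arguments dmap {C} B P partial X.


(* Under [pi0 o partial = !pi0], the two sides of [S(der) o partial = der_S]
   always agree after [pi0] (naturality of [der]), so by joint monicity of
   [pi0, pi1] the equation reduces to its [pi1]-component; naturality of [pi1]
   and of [der] turn that component into [der o d = der o !pi1]. *)

Section DerelictionAndDerivative.

Variables (C : Category) (B : Comonad C) (P : PreSummability C).
Variable partial : forall X : C, Hom (B (P X)) (P (B X)).
Hypothesis partial_pi0 : forall X : C, pi0 P (B X) \o partial X = fmap B (pi0 P X).

Lemma pi0_S_der_partial (X : C) :
  pi0 P X \o (fmap P (der B X) \o partial X) = pi0 P X \o der B (P X).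
Proof.
  rewrite comp_assoc, <- (pi0_natural P), <- comp_assoc, partial_pi0.
  symmetry; apply (der_natural B).
Qed.

Lemma pi1_S_der_partial (X : C) :
  pi1 P X \o (fmap P (der B X) \o partial X) = der B X \o dmap B P partial X.
Proof.
  unfold dmap.
  rewrite comp_assoc, <- (pi1_natural P), comp_assoc.
  reflexivity.
Qed.

Lemma S_der_partial_eq_derP (X : C) :
  fmap P (der B X) \o partial X = der B (P X) <->
  der B X \o dmap B P partial X = der B X \o fmap B (pi1 P X).
Proof.
  rewrite <- pi1_S_der_partial, <- (der_natural B).
  split.
  - intros E; rewrite E; reflexivity.
  - intros E; apply (@pi_jointly_monic _ P); [apply pi0_S_der_partial | exact E].
Qed.

End DerelictionAndDerivative.

Theorem mainTheorem4 (C : Category) (B : Comonad C) (S : Summability C)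
  (partial : forall X : C, Hom (B (S X)) (S (B X)))
  (partial_nat : natural_swap B S partial)
  (partial_pi0 : forall X : C, pi0 S (B X) \o partial X = fmap B (pi0 S X)) :
  (forall X : C, fmap S (der B X) \o partial X = der B (S X)) <->
  (forall X : C, der B X \o dmap B S partial X = der B X \o fmap B (pi1 S X)).
Proof.
  split; intros E X; apply (@S_der_partial_eq_derP C B S partial partial_pi0); apply E.
Qed.
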